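(* Model $\mathbb H^2$ as the Poincaré upper half-plane $\{(u,v)\in\mathbb R^2: v>0\}$ with metric $ds^2=(du^2+dv^2)/v^2$, and consider $\mathbb H^2\times\mathbb R$ with the product metric. Let $A=((0,3),0)$, $B=((4,5),1)$, $C=((-4,5),1)$. Then $$\operatorname{conv}\{A,B,C\}\neq\bigcup\{[A,D]\mid D\in[B,C]\}.$$ More precisely, the point $\bigl((0,\sqrt{17}),\,1-\tfrac{\ln2}{\ln3}\bigr)$ lies in $\operatorname{conv}\{A,B,C\}$, while the only point of $\bigcup\{[A,D]\mid D\in[B,C]\}$ with first coordinate $(0,\sqrt{17})$ is $\bigl((0,\sqrt{17}),\,\tfrac{\ln17-2\ln3}{\ln41-2\ln3}\bigr)$, and these two numbers differ (the first is $<2/5$, the second $>2/5$).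
   Context: In $\mathbb H^2\times\mathbb R$ (a Cartan--Hadamard manifold), the geodesic segment $[P,Q]$ from $P=(x_0,y_0)$ to $Q=(x_1,y_1)$ is $\{(c(t),(1-t)y_0+ty_1): t\in[0,1]\}$, where $c\colon[0,1]\to\mathbb H^2$ is the constant-speed hyperbolic geodesic with $c(0)=x_0$, $c(1)=x_1$. A set $K$ is convex if $[P,Q]\subseteq K$ for all $P,Q\in K$, and $\operatorname{conv}(H)$ is the intersection of all convex sets containing $H$. The hyperbolic distance in the half-plane model is $d(a,b)=2\ln\frac{\sqrt{(a_1-b_1)^2+(a_2-b_2)^2}+\sqrt{(a_1-b_1)^2+(a_2+b_2)^2}}{2\sqrt{a_2b_2}}$. *)

From Stdlib Require Export Reals.
Open Scope R_scope.

(* A point of H^2 (upper half-plane model): a pair (u,v), meaningful when v > 0. *)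
Definition H2pt := (R * R)%type.
Definition Pt := (H2pt * R)%type.

Definition dH (a b : H2pt) : R :=
  2 * ln ((sqrt ((fst a - fst b)^2 + (snd a - snd b)^2)
           + sqrt ((fst a - fst b)^2 + (snd a + snd b)^2))
          / (2 * sqrt (snd a * snd b))).

Definition hgeod (x0 x1 : H2pt) (c : R -> H2pt) : Prop :=
  c 0 = x0 /\ c 1 = x1 /\
  forall s t, 0 <= s <= 1 -> 0 <= t <= 1 ->
    0 < snd (c t) /\ dH (c s) (c t) = Rabs (s - t) * dH x0 x1.

Definition segment (P Q : Pt) : Pt -> Prop :=
  fun X => exists c, hgeod (fst P) (fst Q) c /\
    exists t, 0 <= t <= 1 /\ X = (c t, (1 - t) * snd P + t * snd Q).

Definition convex (K : Pt -> Prop) : Prop :=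
  forall P Q, K P -> K Q -> forall X, segment P Q X -> K X.

Definition conv (H : Pt -> Prop) : Pt -> Prop :=
  fun X => forall K, convex K -> (forall Y, H Y -> K Y) -> K X.

Definition ptA : Pt := ((0, 3), 0).
Definition ptB : Pt := ((4, 5), 1).
Definition ptC : Pt := ((-4, 5), 1).

Definition triple (A B C : Pt) : Pt -> Prop := fun X => X = A \/ X = B \/ X = C.

Definition cone (A B C : Pt) : Pt -> Prop :=
  fun X => exists D, segment B C D /\ segment A D X.

From Stdlib Require Import Reals Lra.
Open Scope R_scope.

(* Everything rests on the cosh form of the half-plane distance:
   e^d + e^-d = ((u - u')^2 + v^2 + v'^2) / (v v').  From it:
   - any curve P with 2 cosh d(P s, P t) = 2 cosh (s - t) is a unit-speed
     geodesic, so its affine reparametrisations are the geodesics [hgeod] of the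
     definition; vertical lines t |-> (u, e^t) and semicircles centred on the
     real axis are such curves, which produces explicit segments of H^2 x R;
   - equality in the triangle inequality is rigid: if d(A,D) = d(A,X) + d(X,D)
     with A, X on a vertical line then D is on it too, and a point of the
     symmetry axis of two mirror points B, C between them is the top of the
     semicircle through B and C.
   The hull point is obtained from two segments over semicircles ([A,B], [A,C])
   followed by a third one; the cone point from the midpoint D0 of [B,C] and the
   vertical segment [A,D0]; rigidity shows any cone point above (0, sqrt 17)
   comes from D0, which fixes its height.  Two numerical inequalities
   (3^3 < 2^5 and 41^2 3^6 < 17^5) separate the two heights. *)

Definition two_cosh (a b : H2pt) : R :=
  ((fst a - fst b)^2 + snd a ^2 + snd b ^2) / (snd a * snd b).

(* Algebraic core of the distance formula: if be^2 - al^2 = 4 s^2 then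
   y = (al + be) / (2 s) satisfies y >= 1 and y^2 + y^-2 = (al^2 + be^2) / (2 s^2). *)
Lemma half_distance_identity (al be s : R) :
  0 <= al -> 0 <= be -> 0 < s -> be * be - al * al = 4 * (s * s) ->
  1 <= (al + be) / (2 * s) /\
  ((al + be) / (2 * s))^2 + / ((al + be) / (2 * s))^2 = (al * al + be * be) / (2 * (s * s)).
Proof.
  intros Hal Hbe Hs Hdiff.
  assert (Hsb : 2 * s <= be) by nra.
  assert (Hinv : / ((al + be) / (2 * s)) = (be - al) / (2 * s)).
  { field_simplify_eq; [nra | split; lra]. }
  split.
  - apply (Rmult_le_reg_r (2 * s)); [lra|]. field_simplify; lra.
  - rewrite <- pow_inv, Hinv.
    field_simplify_eq; [nra | lra].
Qed.

Lemma exp_dH (a b : H2pt) : 0 < snd a -> 0 < snd b ->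
  1 <= exp (dH a b) /\ exp (dH a b) + / exp (dH a b) = two_cosh a b.
Proof.
  destruct a as [ua va], b as [ub vb]; unfold dH, two_cosh; cbn [fst snd]; intros Ha Hb.
  assert (Hx2 := pow2_ge_0 (ua - ub)).
  set (x2 := (ua - ub)^2) in *. clearbody x2.
  assert (Hm := pow2_ge_0 (va - vb)). assert (Hp := pow2_ge_0 (va + vb)).
  assert (Hal := sqrt_sqrt (x2 + (va - vb)^2) ltac:(nra)).
  assert (Hbe := sqrt_sqrt (x2 + (va + vb)^2) ltac:(nra)).
  assert (Hs := sqrt_sqrt (va * vb) ltac:(nra)).
  assert (Hs0 := sqrt_lt_R0 (va * vb) ltac:(nra)).
  destruct (half_distance_identity (sqrt (x2 + (va - vb)^2)) (sqrt (x2 + (va + vb)^2))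
              (sqrt (va * vb)) (sqrt_pos _) (sqrt_pos _) Hs0 ltac:(nra)) as [Hy1 Hy].
  set (y := (sqrt (x2 + (va - vb)^2) + sqrt (x2 + (va + vb)^2)) / (2 * sqrt (va * vb))) in *.
  assert (Hexp : exp (2 * ln y) = y^2).
  { replace (2 * ln y) with (ln y + ln y) by ring. rewrite exp_plus, exp_ln; lra. }
  rewrite Hexp, Hy, Hal, Hbe, Hs. split; [nra | field; lra].
Qed.

Lemma inv_sum_inj (x y : R) : 1 <= x -> 1 <= y -> x + / x = y + / y -> x = y.
Proof.
  intros Hx Hy H.
  assert (Hfact : (x - y) * (x * y - 1) = 0).
  { replace ((x - y) * (x * y - 1)) with ((x + / x - (y + / y)) * (x * y)) by (field; lra).
    rewrite H. ring. }
  destruct (Rmult_integral _ _ Hfact); nra.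
Qed.

Lemma dH_of_two_cosh (a b : H2pt) (w : R) : 0 < snd a -> 0 < snd b -> 1 <= w ->
  two_cosh a b = w + / w -> dH a b = ln w.
Proof.
  intros Ha Hb Hw Hk. destruct (exp_dH a b Ha Hb) as [H1 H2].
  rewrite <- (inv_sum_inj _ _ H1 Hw ltac:(lra)), ln_exp. reflexivity.
Qed.

Lemma dH_eq_of_two_cosh_eq (a b c d : H2pt) :
  0 < snd a -> 0 < snd b -> 0 < snd c -> 0 < snd d ->
  two_cosh a b = two_cosh c d -> dH a b = dH c d.
Proof.
  intros Ha Hb Hc Hd Hk. destruct (exp_dH c d Hc Hd) as [H1 H2].
  rewrite (dH_of_two_cosh a b (exp (dH c d))), ln_exp; auto; lra.
Qed.

Lemma dH_vertical (m al be : R) : 0 < al <= be -> dH (m, al) (m, be) = ln (be / al).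
Proof.
  intros Hab. apply dH_of_two_cosh; cbn [snd]; try lra.
  - apply (Rmult_le_reg_r al); [lra|]. field_simplify; lra.
  - unfold two_cosh; cbn [fst snd]. field. lra.
Qed.

(* A curve of the half-plane is parametrised by arc length along a geodesic
   exactly when two_cosh(P s, P t) = 2 cosh (s - t) for all parameters s, t. *)
Definition cosh_param (P : R -> H2pt) : Prop :=
  (forall t, 0 < snd (P t)) /\
  (forall s t, two_cosh (P s) (P t) = exp (s - t) + exp (t - s)).

Lemma cosh_param_dist (P : R -> H2pt) : cosh_param P ->
  forall s t, dH (P s) (P t) = Rabs (s - t).
Proof.
  intros [Hpos Hk] s t. rewrite <- (ln_exp (Rabs (s - t))).
  apply dH_of_two_cosh; auto.
  - rewrite <- exp_0. destruct (Rle_lt_or_eq _ _ (Rabs_pos (s - t))) as [Hlt | Heq].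
    + left. apply exp_increasing. exact Hlt.
    + rewrite <- Heq. lra.
  - rewrite Hk, <- exp_Ropp. unfold Rabs. destruct (Rcase_abs (s - t)).
    + replace (- - (s - t)) with (s - t) by ring. replace (- (s - t)) with (t - s) by ring. ring.
    + replace (- (s - t)) with (t - s) by ring. ring.
Qed.

Lemma cosh_param_hgeod (P : R -> H2pt) (a b : R) : cosh_param P ->
  hgeod (P a) (P b) (fun t => P (a + t * (b - a))).
Proof.
  intros HP. pose proof (cosh_param_dist P HP) as Hd.
  split; [|split].
  - f_equal; ring.
  - f_equal; ring.
  - intros s t _ _. split; [apply HP|]. rewrite !Hd.
    replace (a + s * (b - a) - (a + t * (b - a))) with ((s - t) * (b - a)) by ring.
    rewrite Rabs_mult, (Rabs_minus_sym a b). reflexivity.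
Qed.

Lemma cosh_param_segment (P : R -> H2pt) (a b t : R) (X Y : Pt) :
  cosh_param P -> fst X = P a -> fst Y = P b -> 0 <= t <= 1 ->
  segment X Y (P (a + t * (b - a)), (1 - t) * snd X + t * snd Y).
Proof.
  intros HP HX HY Ht. exists (fun s => P (a + s * (b - a))). split.
  - rewrite HX, HY. apply cosh_param_hgeod. exact HP.
  - exists t. split; [exact Ht | reflexivity].
Qed.

Definition vline (u t : R) : H2pt := (u, exp t).

Lemma vline_cosh_param (u : R) : cosh_param (vline u).
Proof.
  split; [intros t; apply exp_pos|].
  intros s t. unfold two_cosh, vline, Rminus; cbn [fst snd].
  rewrite !exp_plus, !exp_Ropp.
  pose proof (exp_pos s). pose proof (exp_pos t). field. lra.
Qed.

(* Semicircles centred at (m, 0) of radius r: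
   t |-> (m + r tanh t, r / cosh t), written with w = e^t. *)
Definition arc_point (m r w : R) : H2pt :=
  (m + r * (w^2 - 1) / (w^2 + 1), 2 * r * w / (w^2 + 1)).

Definition arc (m r t : R) : H2pt := arc_point m r (exp t).

Lemma arc_cosh_param (m r : R) : 0 < r -> cosh_param (arc m r).
Proof.
  intros Hr. split.
  - intros t. unfold arc, arc_point; cbn [snd]. pose proof (exp_pos t).
    apply Rdiv_lt_0_compat; nra.
  - intros s t. unfold two_cosh, arc, arc_point, Rminus; cbn [fst snd].
    rewrite !exp_plus, !exp_Ropp.
    pose proof (exp_pos s). pose proof (exp_pos t).
    set (ws := exp s) in *. set (wt := exp t) in *. clearbody ws wt.
    field. repeat split; nra.
Qed.

Lemma arc_ln (m r w : R) : 0 < w -> arc m r (ln w) = arc_point m r w.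
Proof. intros Hw. unfold arc. rewrite exp_ln; auto. Qed.

Lemma hgeod_point (x0 x1 : H2pt) (c : R -> H2pt) (t : R) :
  hgeod x0 x1 c -> 0 <= t <= 1 ->
  0 < snd (c t) /\ dH x0 (c t) = t * dH x0 x1 /\
  dH x0 (c t) + dH (c t) x1 = dH x0 x1.
Proof.
  intros (H0 & H1 & Hd) Ht.
  destruct (Hd 0 t ltac:(lra) Ht) as [Hpos Hleft].
  destruct (Hd t 1 Ht ltac:(lra)) as [_ Hright].
  rewrite H0 in Hleft. rewrite H1 in Hright.
  rewrite Hleft, Hright, !Rabs_left1 by lra. split; [exact Hpos | split; ring].
Qed.

Lemma inv_sum_eq_frac (x p q : R) : 0 < x -> 0 < q -> x + / x = p / q -> q * (x * x + 1) = x * p.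
Proof.
  intros Hx Hq H.
  replace (q * (x * x + 1)) with ((x + / x) * (x * q)) by (field; lra).
  rewrite H. field. lra.
Qed.

Lemma vertical_between (m al be u v : R) : 0 < al < be -> 0 < v ->
  dH (m, al) (u, v) = dH (m, al) (m, be) + dH (m, be) (u, v) -> u = m.
Proof.
  intros Hab Hv Hsum.
  set (F := exp (dH (m, be) (u, v))).
  assert (HAX : exp (dH (m, al) (m, be)) = be / al).
  { rewrite dH_vertical by lra. apply exp_ln, Rdiv_lt_0_compat; lra. }
  assert (HAD : exp (dH (m, al) (u, v)) = be / al * F) by (rewrite Hsum, exp_plus, HAX; reflexivity).
  destruct (exp_dH (m, be) (u, v)) as [HF1 HF]; cbn [snd]; try lra.
  destruct (exp_dH (m, al) (u, v)) as [_ HG]; cbn [snd]; try lra.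
  fold F in HF1, HF. rewrite HAD in HG. unfold two_cosh in HF, HG; cbn [fst snd] in HF, HG.
  apply inv_sum_eq_frac in HF; [|lra|nra].
  apply inv_sum_eq_frac in HG; [|apply Rmult_lt_0_compat; [apply Rdiv_lt_0_compat|]; lra|nra].
  clearbody F.
  assert (HG' : v * (be^2 * F^2 + al^2) = be * F * ((m - u)^2 + al^2 + v^2)).
  { replace (v * (be^2 * F^2 + al^2)) with (al * (al * v * (be / al * F * (be / al * F) + 1)))
      by (field; lra).
    rewrite HG. field. lra. }
  assert (HvF : v = be * F).
  { assert (Hprod : (be^2 - al^2) * (v - be * F) = 0) by nra.
    destruct (Rmult_integral _ _ Hprod); nra. }
  assert (Hx0 : F * (m - u)^2 = 0) by (subst v; nra).
  assert (Hsq : (m - u)^2 = 0) by (destruct (Rmult_integral _ _ Hx0); lra).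
  nra.
Qed.

Lemma axis_between (k h v : R) : 0 < h -> 0 < v ->
  dH (k, h) (0, v) + dH (0, v) (-k, h) = dH (k, h) (-k, h) -> v = sqrt (k^2 + h^2).
Proof.
  intros Hh Hv Hsum.
  assert (Hmirror : dH (0, v) (-k, h) = dH (k, h) (0, v)).
  { apply dH_eq_of_two_cosh_eq; cbn [snd]; try lra. unfold two_cosh; cbn [fst snd]. field. lra. }
  set (E := exp (dH (k, h) (0, v))).
  assert (HBC : exp (dH (k, h) (-k, h)) = E * E)
    by (rewrite <- Hsum, Hmirror, exp_plus; reflexivity).
  destruct (exp_dH (k, h) (0, v)) as [HE1 HE]; cbn [snd]; try lra.
  destruct (exp_dH (k, h) (-k, h)) as [_ HEE]; cbn [snd]; try lra.
  fold E in HE1, HE. rewrite HBC in HEE. unfold two_cosh in HE, HEE; cbn [fst snd] in HE, HEE.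
  assert (Hcosh2 : (E + / E)^2 = (E * E + / (E * E)) + 2) by (field; lra).
  rewrite HE, HEE in Hcosh2.
  assert (Hquart : (v * v - (k^2 + h^2))^2 = 0).
  { replace ((v * v - (k^2 + h^2))^2) with ((h * v)^2 * ((((k - 0)^2 + h^2 + v^2) / (h * v))^2
                                      - ((k - - k)^2 + h^2 + h^2) / (h * h) - 2))
      by (field; lra).
    rewrite Hcosh2. ring. }
  assert (Hvv : v * v = k^2 + h^2) by nra.
  rewrite <- Hvv, sqrt_square; lra.
Qed.

Lemma arc_point_on_circle (m r u y w : R) : 0 < r -> 0 < y -> (u - m)^2 + y^2 = r^2 ->
  w = (r + (u - m)) / y -> (u, y) = arc_point m r w.
Proof.
  intros Hr Hy Hcirc ->. unfold arc_point.
  assert (Hx := pow2_ge_0 (u - m)).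
  assert (Hlt : r + (u - m) > 0) by nra.
  f_equal; field_simplify_eq; try split; try lra; nra.
Qed.

Lemma arc_segment (m r wX wY wZ t : R) (X Y : Pt) :
  0 < r -> 0 < wX -> 0 < wY -> 0 < wZ -> 0 <= t <= 1 ->
  fst X = arc_point m r wX -> fst Y = arc_point m r wY ->
  ln wZ = ln wX + t * (ln wY - ln wX) ->
  segment X Y (arc_point m r wZ, (1 - t) * snd X + t * snd Y).
Proof.
  intros Hr HwX HwY HwZ Ht HX HY Hpar.
  rewrite <- (arc_ln m r wZ HwZ), Hpar.
  apply cosh_param_segment; try rewrite arc_ln; auto using arc_cosh_param.
Qed.

Definition hull_height : R := 1 - ln 2 / ln 3.
Definition cone_height : R := (ln 17 - 2 * ln 3) / (ln 41 - 2 * ln 3).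

Lemma ln_pos_gt1 (x : R) : 1 < x -> 0 < ln x.
Proof. intros Hx. rewrite <- ln_1. apply ln_increasing; lra. Qed.

Lemma ln_sqrt (x : R) : 0 < x -> ln (sqrt x) = ln x / 2.
Proof.
  intros Hx. pose proof (sqrt_lt_R0 x Hx).
  rewrite <- (sqrt_sqrt x) at 2 by lra. rewrite ln_mult by lra. field.
Qed.

Lemma ln_div (x y : R) : 0 < x -> 0 < y -> ln (x / y) = ln x - ln y.
Proof. intros Hx Hy. unfold Rdiv. rewrite ln_mult, ln_Rinv; auto using Rinv_0_lt_compat. Qed.

(* 3^3 < 2^5, i.e. ln 2 / ln 3 > 3/5. *)
Lemma hull_height_lt : hull_height < 2 / 5.
Proof.
  unfold hull_height. pose proof (ln_pos_gt1 3 ltac:(lra)).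
  assert (Hpow : ln (3^3) < ln (2^5)) by (apply ln_increasing; simpl; lra).
  rewrite !ln_pow in Hpow by lra.
  assert (3 / 5 < ln 2 / ln 3).
  { apply (Rmult_lt_reg_r (ln 3)); [lra|]. field_simplify; simpl in Hpow; lra. }
  lra.
Qed.

Lemma hull_height_range : 0 <= hull_height <= 1.
Proof.
  unfold hull_height.
  pose proof (ln_pos_gt1 2 ltac:(lra)). pose proof (ln_increasing 2 3 ltac:(lra) ltac:(lra)).
  assert (0 < ln 2 / ln 3 < 1).
  { split; [apply Rdiv_lt_0_compat; lra|].
    apply (Rmult_lt_reg_r (ln 3)); [lra|]. field_simplify; lra. }
  lra.
Qed.

Lemma lt_sqrt (a x : R) : 0 <= a -> a * a < x -> a < sqrt x.
Proof. intros Ha Hx. rewrite <- (sqrt_square a) at 1 by lra. apply sqrt_lt_1; nra. Qed.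

Lemma ln_9 : ln 9 = 2 * ln 3.
Proof. replace 9 with (3 * 3) by ring. rewrite ln_mult by lra. ring. Qed.

(* 41^2 * 3^6 < 17^5, i.e. 5 (ln 17 - ln 9) > 2 (ln 41 - ln 9). *)
Lemma cone_height_gt : 2 / 5 < cone_height.
Proof.
  unfold cone_height. pose proof (ln_increasing 9 41 ltac:(lra) ltac:(lra)). rewrite ln_9 in *.
  assert (Hpow : ln (41^2 * 3^6) < ln (17^5)) by (apply ln_increasing; simpl; lra).
  rewrite ln_mult, !ln_pow in Hpow by (simpl; lra). simpl in Hpow.
  apply (Rmult_lt_reg_r (ln 41 - 2 * ln 3)); [lra|]. field_simplify; lra.
Qed.

(* The cone height is the ratio d(A,X) / d(A,D) for A = (0,3), X = (0,sqrt 17),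
   D = (0,sqrt 41) on the vertical geodesic. *)
Lemma cone_height_ratio : cone_height = ln (sqrt 17 / 3) / ln (sqrt 41 / 3).
Proof.
  assert (H41 : ln 9 < ln 41) by (apply ln_increasing; lra). rewrite ln_9 in H41.
  unfold cone_height.
  rewrite !ln_div, !ln_sqrt by (try apply sqrt_lt_R0; lra).
  field. lra.
Qed.

Lemma cone_height_range : 0 <= cone_height <= 1.
Proof.
  rewrite cone_height_ratio.
  assert (Hq17 := sqrt_lt_R0 17 ltac:(lra)).
  assert (Hlt : 3 < sqrt 17 < sqrt 41).
  { split; [apply lt_sqrt | apply sqrt_lt_1]; lra. }
  pose proof (ln_pos_gt1 (sqrt 17 / 3) ltac:(apply (Rmult_lt_reg_r 3); [lra|]; field_simplify; lra)).
  pose proof (ln_increasing (sqrt 17 / 3) (sqrt 41 / 3) ltac:(apply Rdiv_lt_0_compat; lra) ltac:(lra)).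
  split; [apply Rlt_le, Rdiv_lt_0_compat; lra|].
  apply (Rmult_le_reg_r (ln (sqrt 41 / 3))); [lra|]. field_simplify; lra.
Qed.

(* ((1,4), hull_height) lies on [A,B]: both A and (1,4) are on the semicircle of
   centre (4,0) and radius 5 through B. *)
Lemma AB_point : segment ptA ptB ((1, 4), hull_height).
Proof.
  pose proof (ln_pos_gt1 3 ltac:(lra)). pose proof hull_height_range.
  replace ((1, 4), hull_height) with (arc_point 4 5 (/ 2), (1 - hull_height) * 0 + hull_height * 1)
    by (f_equal; [symmetry; apply arc_point_on_circle; try lra; field | ring]).
  apply arc_segment with (wX := / 3) (wY := 1); try lra; cbn [fst ptA ptB].
  - apply arc_point_on_circle; try lra; field.
  - apply arc_point_on_circle; try lra; field.
  - rewrite ln_1, !ln_Rinv by lra. unfold hull_height. field. lra.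
Qed.

Lemma AC_point : segment ptA ptC ((-1, 4), hull_height).
Proof.
  pose proof (ln_pos_gt1 3 ltac:(lra)). pose proof hull_height_range.
  replace ((-1, 4), hull_height) with (arc_point (-4) 5 2, (1 - hull_height) * 0 + hull_height * 1)
    by (f_equal; [symmetry; apply arc_point_on_circle; try lra; field | ring]).
  apply arc_segment with (wX := 3) (wY := 1); try lra; cbn [fst ptA ptC].
  - apply arc_point_on_circle; try lra; field.
  - apply arc_point_on_circle; try lra; field.
  - rewrite ln_1. unfold hull_height. field. lra.
Qed.

(* ((0, sqrt 17), hull_height) is the midpoint of the segment joining the two
   points above, which lie on the semicircle of centre (0,0) and radius sqrt 17. *)
Lemma hull_midpoint : segment ((1, 4), hull_height) ((-1, 4), hull_height)
                              ((0, sqrt 17), hull_height).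
Proof.
  assert (Hq := sqrt_sqrt 17 ltac:(lra)). assert (Hq4 : 4 < sqrt 17) by (apply lt_sqrt; lra).
  set (q := sqrt 17) in *. clearbody q.
  replace ((0, q), hull_height)
    with (arc_point 0 q 1, (1 - / 2) * hull_height + / 2 * hull_height)
    by (f_equal; [symmetry; apply arc_point_on_circle; try lra; field; lra | field]).
  apply arc_segment with (wX := (q + 1) / 4) (wY := (q - 1) / 4); try lra; cbn [fst].
  - apply arc_point_on_circle; try lra; try field; lra.
  - apply arc_point_on_circle; try lra; try field; nra.
  - assert (Hinv : (q - 1) / 4 = / ((q + 1) / 4)) by (field_simplify_eq; lra).
    rewrite ln_1, Hinv, ln_Rinv by lra. field.
Qed.

Lemma hull_point : conv (triple ptA ptB ptC) ((0, sqrt 17), hull_height).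
Proof.
  intros K HK Hsub.
  assert (KA : K ptA) by (apply Hsub; left; reflexivity).
  assert (KB : K ptB) by (apply Hsub; right; left; reflexivity).
  assert (KC : K ptC) by (apply Hsub; right; right; reflexivity).
  apply (HK _ _ (HK _ _ KA KB _ AB_point) (HK _ _ KA KC _ AC_point) _ hull_midpoint).
Qed.

Lemma BC_midpoint : segment ptB ptC ((0, sqrt 41), 1).
Proof.
  assert (Hp := sqrt_sqrt 41 ltac:(lra)). assert (Hp6 : 6 < sqrt 41) by (apply lt_sqrt; lra).
  set (p := sqrt 41) in *. clearbody p.
  replace ((0, p), 1) with (arc_point 0 p 1, (1 - / 2) * snd ptB + / 2 * snd ptC)
    by (f_equal; [symmetry; apply arc_point_on_circle; try lra; field; lra | cbn; field]).
  apply arc_segment with (wX := (p + 4) / 5) (wY := (p - 4) / 5); try lra; cbn [fst ptB ptC].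
  - apply arc_point_on_circle; try lra; try field; lra.
  - apply arc_point_on_circle; try lra; try field; nra.
  - assert (Hinv : (p - 4) / 5 = / ((p + 4) / 5)) by (field_simplify_eq; lra).
    rewrite ln_1, Hinv, ln_Rinv by lra. field.
Qed.

Lemma cone_point : cone ptA ptB ptC ((0, sqrt 17), cone_height).
Proof.
  exists ((0, sqrt 41), 1). split; [exact BC_midpoint|].
  assert (H17 := sqrt_lt_R0 17 ltac:(lra)). assert (H41 := sqrt_lt_R0 41 ltac:(lra)).
  assert (Hvert : forall y, 0 < y -> (0, y) = vline 0 (ln y))
    by (intros y Hy; unfold vline; rewrite exp_ln; auto).
  replace ((0, sqrt 17), cone_height)
    with (vline 0 (ln 3 + cone_height * (ln (sqrt 41) - ln 3)),
          (1 - cone_height) * snd ptA + cone_height * 1).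
  - apply cosh_param_segment; auto using vline_cosh_param, cone_height_range;
      apply Hvert; lra.
  - cbn [snd ptA]. f_equal; [|ring].
    rewrite (Hvert (sqrt 17)) by lra. f_equal.
    pose proof (ln_increasing 9 41 ltac:(lra) ltac:(lra)). rewrite ln_9 in *.
    unfold cone_height. rewrite !ln_sqrt by lra. field. lra.
Qed.

(* Any point X = (x, s) of the cone with x = (0, sqrt 17) has s = cone_height:
   if X lies on [A, D] with D on [B, C], equality in the triangle inequality
   forces D onto the vertical line through A and X, hence onto the symmetry axis
   of B and C, hence D = D0; then s is the fraction d(A,X) / d(A,D0). *)
Lemma cone_fiber : forall X, cone ptA ptB ptC X -> fst X = (0, sqrt 17) -> snd X = cone_height.
Proof.
  intros X [D [[c [Hc [t1 [Ht1 ->]]]] [c' [Hc' [t2 [Ht2 ->]]]]]] HX.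
  cbn [fst snd ptA ptB ptC] in *.
  destruct (hgeod_point _ _ _ t1 Hc Ht1) as (Hv & _ & HBC).
  destruct (hgeod_point _ _ _ t2 Hc' Ht2) as (_ & Hratio & HAD).
  rewrite HX in Hratio, HAD.
  destruct (c t1) as [u v]. cbn [snd] in Hv.
  assert (H17 : 3 < sqrt 17) by (apply lt_sqrt; lra).
  assert (Hu : u = 0) by (apply (vertical_between 0 3 (sqrt 17) u v); lra).
  subst u.
  assert (Hv41 : v = sqrt 41).
  { replace 41 with (4^2 + 5^2) by ring. apply axis_between; [lra | lra |].
    replace (- (4)) with (-4) by ring. exact HBC. }
  subst v.
  assert (H41 : sqrt 17 < sqrt 41) by (apply sqrt_lt_1; lra).
  rewrite !dH_vertical in Hratio by lra.
  assert (Hpos : 0 < ln (sqrt 41 / 3)).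
  { apply ln_pos_gt1. apply (Rmult_lt_reg_r 3); [lra|]. field_simplify; lra. }
  rewrite cone_height_ratio, Hratio. field. lra.
Qed.

Theorem mainTheorem11 :
  (conv (triple ptA ptB ptC) <> cone ptA ptB ptC) /\
  conv (triple ptA ptB ptC) ((0, sqrt 17), 1 - ln 2 / ln 3) /\
  cone ptA ptB ptC ((0, sqrt 17), (ln 17 - 2 * ln 3) / (ln 41 - 2 * ln 3)) /\
  (forall X, cone ptA ptB ptC X -> fst X = (0, sqrt 17) ->
     snd X = (ln 17 - 2 * ln 3) / (ln 41 - 2 * ln 3)) /\
  1 - ln 2 / ln 3 < 2 / 5 /\
  2 / 5 < (ln 17 - 2 * ln 3) / (ln 41 - 2 * ln 3).
Proof.
  fold hull_height cone_height.
  pose proof hull_height_lt. pose proof cone_height_gt.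
  split; [|auto using hull_point, cone_point, cone_fiber].
  intros Heq.
  assert (Hcone := hull_point). rewrite Heq in Hcone.
  assert (Hsnd := cone_fiber _ Hcone eq_refl). cbn [snd] in Hsnd. lra.
Qed.
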